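(* Let $\alpha\in(0,1)$, $\psi(s)=s^{-\alpha}$ for $s>0$, $\psi(0)=0$, and $\Psi(s):=\frac{1}{1-\alpha}s^{1-\alpha}$. Let $\phi:[0,\infty)\to\mathbb{R}$ be a solution of $\ddot\phi(t)=-2\dot\phi(t)\psi(|\phi(t)|)$ with $\phi(0)>0$ and $\dot\phi(0)\in\mathbb{R}$. Then the following are equivalent: (1) there exists a time $t_0<\infty$ such that $\phi(t_0)=\dot\phi(t_0)=0$; (2) the initial data satisfy $\dot\phi(0)=-2\Psi(\phi(0))$.
   Context: This equation describes two particles $x_1,x_2$ on a line ($d=1$) governed by the Cucker–Smale system $\dot x_i=v_i$, $\dot v_i=\frac12\sum_{k=1}^2(v_k-v_i)\psi(|x_k-x_i|)$, normalized so that $x_1\equiv -x_2$, $v_1\equiv -v_2$, with $\phi=x_2-x_1$. A solution is understood in the piecewise weak sense: $\phi\in C^1([0,\infty))$, and on every compact subinterval of an interval between consecutive zeros (collision times) of $\phi$, $\phi$ belongs to $W^{2,1}$ and satisfies the equation weakly; once $\phi$ and $\dot\phi$ vanish simultaneously the particles are stuck and $\phi\equiv 0$ afterwards. *)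

From Stdlib Require Import Reals.
From Coquelicot Require Import Coquelicot.
Open Scope R_scope.

Definition psi (alpha s : R) : R := if Rlt_dec 0 s then Rpower s (- alpha) else 0.

Definition Psi (alpha s : R) : R := / (1 - alpha) * Rpower s (1 - alpha).

(* phi is C^1 on [0,oo) with derivative dphi (one-sided derivative at 0,
   continuity of dphi within [0,oo)). Values for t < 0 are irrelevant. *)
Definition C1_on_nonneg (phi dphi : R -> R) : Prop :=
  (forall t, 0 < t -> is_derive phi t (dphi t)) /\
  filterlim (fun h => (phi h - phi 0) / h) (at_right 0) (locally (dphi 0)) /\
  (forall t, 0 <= t ->
     filterlim dphi (within (fun s => 0 <= s) (locally t)) (locally (dphi t))).

(* Piecewise weak solution of  phi'' = -2 phi' psi(|phi|)  on [0,oo):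
   - phi in C^1([0,oo));
   - on every compact interval [a,b] of [0,oo) on which phi does not vanish
     (i.e. every compact subinterval of an interval between consecutive zeros),
     phi' is absolutely continuous with derivative -2 phi' psi(|phi|), written
     in integrated form  phi'(b) - phi'(a) = int_a^b -2 phi' psi(|phi|);
   - sticking: once phi and phi' vanish simultaneously, phi = 0 afterwards. *)
Definition CS_solution (alpha : R) (phi dphi : R -> R) : Prop :=
  C1_on_nonneg phi dphi /\
  (forall a b, 0 <= a -> a <= b ->
     (forall s, a <= s <= b -> phi s <> 0) ->
     is_RInt (fun s => -2 * dphi s * psi alpha (Rabs (phi s))) a b
             (dphi b - dphi a)) /\
  (forall t, 0 <= t -> phi t = 0 -> dphi t = 0 ->
     forall s, t <= s -> phi s = 0).

From Stdlib Require Import Reals Lra Classical.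
From Coquelicot Require Import Coquelicot.
Open Scope R_scope.

(* Since Psi' = psi, the equation says that E = phi' + 2 Psi(phi) is constant while
   phi > 0, and E extends continuously to the zeros of phi, where Psi vanishes.
   Hence at the first zero t1 of phi, phi'(t1) = E(0) = phi'(0) + 2 Psi(phi(0)).
   If the particles get stuck, E(0) > 0 is impossible because phi decreases into t1,
   and E(0) < 0 is impossible because phi then turns negative and the mirrored
   energy phi' - 2 Psi(-phi) forces phi' < 0 at the next zero, which phi reaches
   from below.  Conversely, if E(0) = 0 then (phi^alpha)' = -2 alpha / (1 - alpha)
   while phi > 0, so phi reaches 0 in finite time, with slope E(0) = 0. *)

Lemma at_right_limit_of_const_on (g : R -> R) a b c l :
  a < b -> (forall t, a < t < b -> g t = c) ->
  filterlim g (at_right a) (locally l) -> l = c.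
Proof.
  intros Hab Hg Hl.
  apply (filterlim_locally_unique (F := at_right a) g); [exact Hl|].
  apply (filterlim_ext_loc (fun _ => c)); [|apply filterlim_const].
  exists (mkposreal _ (proj2 (Rlt_0_minus _ _) Hab)); intros t Ht Hat.
  change (Rabs (t - a) < b - a) in Ht.
  symmetry; apply Hg; apply Rabs_def2 in Ht; lra.
Qed.

Lemma at_left_limit_of_const_on (g : R -> R) a b c l :
  a < b -> (forall t, a < t < b -> g t = c) ->
  filterlim g (at_left b) (locally l) -> l = c.
Proof.
  intros Hab Hg Hl.
  apply (filterlim_locally_unique (F := at_left b) g); [exact Hl|].
  apply (filterlim_ext_loc (fun _ => c)); [|apply filterlim_const].
  exists (mkposreal _ (proj2 (Rlt_0_minus _ _) Hab)); intros t Ht Htb.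
  change (Rabs (t - b) < b - a) in Ht.
  symmetry; apply Hg; apply Rabs_def2 in Ht; lra.
Qed.

Lemma continuous_at_right (f : R -> R) x :
  continuous f x -> filterlim f (at_right x) (locally (f x)).
Proof. intros Hf; eapply filterlim_filter_le_1; [apply filter_le_within | exact Hf]. Qed.

Lemma continuous_at_left (f : R -> R) x :
  continuous f x -> filterlim f (at_left x) (locally (f x)).
Proof. intros Hf; eapply filterlim_filter_le_1; [apply filter_le_within | exact Hf]. Qed.

Lemma continuous_of_within (f : R -> R) (D : R -> Prop) x :
  locally x D -> filterlim f (within D (locally x)) (locally (f x)) -> continuous f x.
Proof.
  intros HD Hf P HP. unfold filtermap.
  apply (filter_imp (fun y => D y /\ (D y -> P (f y)))); [tauto|].
  apply filter_and; [exact HD | exact (Hf P HP)].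
Qed.

Lemma right_continuous_of_right_derivative (f : R -> R) x l :
  filterlim (fun h => (f h - f x) / (h - x)) (at_right x) (locally l) ->
  filterlim f (at_right x) (locally (f x)).
Proof.
  intros Hq.
  apply (filterlim_ext_loc (fun h => f x + (h - x) * ((f h - f x) / (h - x)))).
  { exists (mkposreal 1 Rlt_0_1); intros h _ Hh; field; lra. }
  replace (locally (f x)) with (locally (f x + (x - x) * l)) by (f_equal; ring).
  eapply filterlim_comp_2;
    [apply filterlim_const | | exact (filterlim_plus (f x) ((x - x) * l))].
  eapply filterlim_comp_2; [| exact Hq | exact (filterlim_mult (x - x) l)].
  apply continuous_at_right with (f := fun h => h - x).
  apply (continuous_minus (fun h => h) (fun _ => x));
    [apply continuous_id | apply continuous_const].
Qed.

Lemma filterlim_eventually_pos {T} {F : (T -> Prop) -> Prop} (f : T -> R) l :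
  filterlim f F (locally l) -> 0 < l -> F (fun x => 0 < f x).
Proof.
  intros Hf Hl. apply (Hf (fun y => 0 < y)).
  exists (mkposreal l Hl); intros y Hy.
  change (Rabs (y - l) < l) in Hy. apply Rabs_def2 in Hy. lra.
Qed.

Lemma positive_prefix_sup (g : R -> R) u v :
  u <= v -> 0 < g u ->
  exists m, u <= m <= v /\ (forall s, u <= s < m -> 0 < g s) /\
    forall t, m < t <= v -> exists s, u <= s <= t /\ g s <= 0.
Proof.
  intros Huv Hu.
  set (E := fun t => u <= t <= v /\ forall s, u <= s <= t -> 0 < g s).
  assert (Hbound : bound E) by (exists v; intros t Ht; apply Ht).
  assert (HEu : E u).
  { split; [lra|]. intros s Hs. replace s with u by lra. exact Hu. }
  destruct (completeness E Hbound (ex_intro _ u HEu)) as [m [Hub Hlub]].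
  exists m; split; [split; [apply Hub, HEu | apply Hlub; intros t Ht; apply Ht]|]. split.
  - intros s Hs. apply Rnot_le_lt; intros Hgs.
    enough (m <= s) by lra.
    apply Hlub; intros t [_ Ht]. apply Rnot_lt_le; intros Hst.
    specialize (Ht s ltac:(lra)). lra.
  - intros t Ht. apply NNPP; intros Hnone.
    enough (t <= m) by lra.
    apply Hub. split; [split; [apply Rle_trans with m; [apply Hub, HEu|]|]; lra|].
    intros s Hs. apply Rnot_le_lt; intros Hgs. apply Hnone; exists s; auto.
Qed.

Lemma first_zero (g : R -> R) u v :
  u < v -> 0 < g u -> g v <= 0 ->
  filterlim g (at_right u) (locally (g u)) ->
  (forall t, u < t <= v -> continuous g t) ->
  exists w, u < w <= v /\ g w = 0 /\ forall s, u <= s < w -> 0 < g s.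
Proof.
  intros Huv Hu Hv Hright Hcont.
  destruct (positive_prefix_sup g u v ltac:(lra) Hu) as [m [Hm [Hbelow Habove]]].
  assert (Hum : u < m).
  { destruct (filterlim_eventually_pos g _ Hright Hu) as [d Hd].
    apply Rnot_le_lt; intros Hmu.
    destruct (Habove (u + Rmin d (v - u) / 2)) as [s [Hs Hgs]].
    { assert (Hmin := Rmin_pos d (v - u) (cond_pos d) ltac:(lra)).
      assert (Hmv := Rmin_r d (v - u)). lra. }
    destruct (Req_dec s u) as [->|Hsu]; [lra|].
    assert (Hmd := Rmin_l d (v - u)).
    enough (0 < g s) by lra.
    apply Hd; [change (Rabs (s - u) < d); rewrite Rabs_pos_eq|]; lra. }
  exists m; split; [lra|]; split; [|exact Hbelow].
  destruct (Rtotal_order (g m) 0) as [Hneg|[Hzero|Hpos]]; [exfalso| exact Hzero | exfalso].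
  - destruct (filterlim_eventually_pos (fun s => - g s) (- g m)
                (continuous_opp g m (Hcont m ltac:(lra))) ltac:(lra)) as [d Hd].
    set (s := m - Rmin d (m - u) / 2).
    assert (Hmin := Rmin_pos d (m - u) (cond_pos d) ltac:(lra)).
    assert (Hmd := Rmin_l d (m - u)). assert (Hmu := Rmin_r d (m - u)).
    assert (Hgs : 0 < - g s).
    { apply Hd. change (Rabs (s - m) < d). rewrite Rabs_left; unfold s; lra. }
    assert (Hgs' : 0 < g s) by (apply Hbelow; unfold s; lra).
    lra.
  - assert (Hmv : m < v) by (destruct (Req_dec m v) as [->|]; lra).
    destruct (filterlim_eventually_pos g (g m) (Hcont m ltac:(lra)) Hpos) as [d Hd].
    assert (Hmin := Rmin_pos d (v - m) (cond_pos d) ltac:(lra)).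
    assert (Hmd := Rmin_l d (v - m)). assert (Hvm := Rmin_r d (v - m)).
    destruct (Habove (m + Rmin d (v - m) / 2)) as [s [Hs Hgs]]; [lra|].
    destruct (Rlt_le_dec s m) as [Hsm|Hms]; [specialize (Hbelow s ltac:(lra)); lra|].
    enough (0 < g s) by lra.
    apply Hd. change (Rabs (s - m) < d). rewrite Rabs_pos_eq; lra.
Qed.

Lemma derive_quotient_pos_near_zero (f : R -> R) z l :
  is_derive f z l -> f z = 0 -> 0 < l ->
  exists d, 0 < d /\ forall h, h <> 0 -> Rabs h < d -> 0 < f (z + h) / h.
Proof.
  intros Hd Hz Hl.
  destruct (proj1 (is_derive_Reals _ _ _) Hd l Hl) as [d Hq].
  exists d; split; [apply cond_pos|]. intros h Hh Hhd.
  specialize (Hq h Hh Hhd). rewrite Hz, Rminus_0_r in Hq.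
  apply Rabs_def2 in Hq. lra.
Qed.

Lemma derive_nonpos_of_pos_left (f : R -> R) z l d :
  is_derive f z l -> f z = 0 -> 0 < d ->
  (forall s, z - d < s < z -> 0 < f s) -> l <= 0.
Proof.
  intros Hd Hz Hd0 Hpos. apply Rnot_lt_le; intros Hl.
  destruct (derive_quotient_pos_near_zero f z l Hd Hz Hl) as [e [He Hq]].
  set (h := - Rmin d e / 2).
  assert (Hm := Rmin_pos d e Hd0 He). assert (Hmd := Rmin_l d e). assert (Hme := Rmin_r d e).
  assert (Hfh : 0 < f (z + h)) by (apply Hpos; unfold h; lra).
  assert (Hqh : 0 < f (z + h) / h)
    by (apply Hq; unfold h; [lra | rewrite Rabs_left; lra]).
  assert (Hh : h < 0) by (unfold h; lra).
  assert (Hneg : f (z + h) / h < 0) by (apply Rdiv_pos_neg; assumption).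
  lra.
Qed.

Lemma neg_right_of_neg_derive (f : R -> R) z l :
  is_derive f z l -> f z = 0 -> l < 0 ->
  exists d, 0 < d /\ forall s, z < s < z + d -> f s < 0.
Proof.
  intros Hd Hz Hl.
  destruct (derive_quotient_pos_near_zero (fun s => - f s) z (- l)) as [d [Hd0 Hq]].
  { apply (is_derive_opp f z l), Hd. }
  { rewrite Hz; ring. }
  { lra. }
  exists d; split; [exact Hd0|]. intros s Hs.
  assert (Hsz : 0 < - f s / (s - z)).
  { replace s with (z + (s - z)) at 1 by ring. apply Hq; [lra | rewrite Rabs_pos_eq; lra]. }
  assert (Hpos : 0 < - f s / (s - z) * (s - z)) by (apply Rmult_lt_0_compat; lra).
  replace (- f s / (s - z) * (s - z)) with (- f s) in Hpos by (field; lra).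
  lra.
Qed.

Lemma const_of_derive_zero (g : R -> R) a b :
  (forall t, a < t <= b -> is_derive g t 0) ->
  forall x y, a < x <= b -> a < y <= b -> g y = g x.
Proof.
  intros Hd x y Hx Hy.
  destruct (MVT_gen g x y (fun _ => 0)) as [c [_ Hc]].
  - intros t Ht. apply Hd. split.
    + apply Rle_lt_trans with (Rmin x y); [apply Rmin_glb|]; lra.
    + apply Rle_trans with (Rmax x y); [lra | apply Rmax_lub; lra].
  - intros t Ht. apply derivable_continuous_pt. exists 0.
    apply is_derive_Reals, Hd. split.
    + apply Rlt_le_trans with (Rmin x y); [apply Rmin_glb_lt|]; lra.
    + apply Rle_trans with (Rmax x y); [lra | apply Rmax_lub; lra].
  - lra.
Qed.

Lemma Psi_vanishes_at_0 alpha :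
  alpha < 1 -> filterlim (Psi alpha) (at_right 0) (locally 0).
Proof.
  intros Ha. unfold Psi, Rpower.
  replace 0 with (/ (1 - alpha) * 0) at 2 by ring.
  apply (filterlim_comp _ _ _ (fun s => exp ((1 - alpha) * ln s)) (Rmult (/ (1 - alpha)))
           _ (locally 0)).
  2: { apply (filterlim_scal_r (K := R_AbsRing) (V := R_NormedModule)). }
  apply (filterlim_comp _ _ _ (fun s => (1 - alpha) * ln s) exp _ (Rbar_locally m_infty)).
  2: exact is_lim_exp_m.
  apply (filterlim_comp _ _ _ ln (Rmult (1 - alpha)) _ (Rbar_locally m_infty)).
  - exact is_lim_ln_0.
  - replace (Rbar_locally m_infty) with (Rbar_locally (Rbar_mult (1 - alpha) m_infty)) at 2.
    + apply filterlim_Rbar_mult_l.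
    + simpl. destruct (Rle_dec 0 (1 - alpha)) as [H|H]; [|lra].
      destruct (Rle_lt_or_eq_dec 0 (1 - alpha) H); [reflexivity|lra].
Qed.

Lemma is_derive_Psi alpha y :
  alpha <> 1 -> 0 < y -> is_derive (Psi alpha) y (Rpower y (- alpha)).
Proof.
  intros Ha Hy. unfold Psi.
  replace (Rpower y (- alpha))
    with (/ (1 - alpha) * ((1 - alpha) * Rpower y (1 - alpha - 1))).
  - apply is_derive_scal, is_derive_Reals, derivable_pt_lim_power; exact Hy.
  - replace (1 - alpha - 1) with (- alpha) by ring. field. lra.
Qed.

(* [Rpower 0 y = 1], so [Psi alpha 0] is junk; [Psi0] is the continuous extension. *)
Definition Psi0 (alpha s : R) : R := if Rlt_dec 0 s then Psi alpha s else 0.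

Lemma continuous_Psi0_abs alpha x :
  alpha < 1 -> continuous (fun y => Psi0 alpha (Rabs y)) x.
Proof.
  intros Ha. destruct (Req_dec x 0) as [->|Hx].
  - intros P [eps Heps]. unfold filtermap.
    destruct (Psi_vanishes_at_0 alpha Ha (ball 0 eps) (locally_ball 0 eps)) as [d Hd].
    assert (H0 : Psi0 alpha (Rabs 0) = 0).
    { unfold Psi0. rewrite Rabs_R0. destruct (Rlt_dec 0 0); [lra | reflexivity]. }
    rewrite H0 in Heps. exists d; intros y Hy. apply Heps.
    unfold Psi0. destruct (Rlt_dec 0 (Rabs y)) as [Hpos|]; [|apply ball_center].
    apply Hd; [|exact Hpos].
    change (Rabs (Rabs y - 0) < d). change (Rabs (y - 0) < d) in Hy.
    rewrite Rminus_0_r, Rabs_Rabsolu in *. exact Hy.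
  - assert (Hax : 0 < Rabs x) by (apply Rabs_pos_lt; exact Hx).
    apply (continuous_ext_loc _ (fun y => Psi alpha (Rabs y))).
    + exists (mkposreal _ Hax); intros y Hy.
      change (Rabs (y - x) < Rabs x) in Hy.
      unfold Psi0. destruct (Rlt_dec 0 (Rabs y)) as [|Hn]; [reflexivity|].
      exfalso; apply Hn. assert (H := Rabs_triang_inv x y).
      rewrite <- Rabs_Ropp, Ropp_minus_distr in Hy. lra.
    + apply continuous_comp; [apply continuous_Rabs|].
      apply (ex_derive_continuous (K := R_AbsRing) (V := R_NormedModule)).
      eexists; apply is_derive_Psi; [lra | exact Hax].
Qed.

(* Conserved while [f > 0]; phases where [f < 0] are handled through [(-f, -df)]. *)
Definition energy (alpha : R) (f df : R -> R) (t : R) : R :=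
  df t + 2 * Psi0 alpha (Rabs (f t)).

Lemma energy_pos alpha (f df : R -> R) t :
  0 < f t -> energy alpha f df t = df t + 2 * Psi alpha (f t).
Proof.
  intros Hf. unfold energy, Psi0. rewrite Rabs_pos_eq by lra.
  destruct (Rlt_dec 0 (f t)); [reflexivity | lra].
Qed.

Lemma energy_zero alpha (f df : R -> R) t : f t = 0 -> energy alpha f df t = df t.
Proof.
  intros Hf. unfold energy, Psi0. rewrite Hf, Rabs_R0.
  destruct (Rlt_dec 0 0); [lra | ring].
Qed.

Lemma filterlim_energy {F : (R -> Prop) -> Prop} {FF : Filter F} alpha (f df : R -> R) x :
  alpha < 1 -> filterlim f F (locally (f x)) -> filterlim df F (locally (df x)) ->
  filterlim (energy alpha f df) F (locally (energy alpha f df x)).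
Proof.
  intros Ha Hf Hdf. unfold energy.
  eapply filterlim_comp_2; [exact Hdf | | exact (filterlim_plus (df x) _)].
  apply (filterlim_comp _ _ _ f (fun y => 2 * Psi0 alpha (Rabs y)) _ _ _ Hf).
  apply (continuous_scal_r 2 (fun y => Psi0 alpha (Rabs y))), continuous_Psi0_abs, Ha.
Qed.

Lemma energy_conserved alpha (f df : R -> R) a b :
  alpha <> 1 -> a <= b ->
  (forall s, a <= s <= b -> is_derive f s (df s)) ->
  (forall s, a <= s <= b -> continuous df s) ->
  (forall s, a <= s <= b -> 0 < f s) ->
  is_RInt (fun s => -2 * df s * psi alpha (Rabs (f s))) a b (df b - df a) ->
  energy alpha f df b = energy alpha f df a.
Proof.
  intros Ha Hab Hd Hc Hpos Hint.
  assert (Hab' : forall s, Rmin a b <= s <= Rmax a b -> a <= s <= b)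
    by (rewrite Rmin_left, Rmax_right by exact Hab; tauto).
  assert (Hftc : is_RInt (fun s => -2 * (df s * Rpower (f s) (- alpha))) a b
                   (-2 * Psi alpha (f b) - -2 * Psi alpha (f a))).
  { apply (is_RInt_derive (fun s => -2 * Psi alpha (f s))).
    - intros s Hs%Hab'. apply is_derive_scal.
      apply (is_derive_comp (Psi alpha) f); [apply is_derive_Psi|]; auto.
    - intros s Hs%Hab'. apply (continuous_scal_r (-2) (fun s => df s * Rpower (f s) (- alpha))).
      apply (continuous_mult df (fun s => Rpower (f s) (- alpha))); [auto|].
      apply (continuous_comp f (fun y => Rpower y (- alpha))).
      + apply (ex_derive_continuous (K := R_AbsRing) (V := R_NormedModule)).
        eexists; apply Hd, Hs.
      + apply (ex_derive_continuous (K := R_AbsRing) (V := R_NormedModule)).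
        eexists; apply is_derive_Reals, derivable_pt_lim_power, Hpos, Hs. }
  assert (Hext : is_RInt (fun s => -2 * df s * psi alpha (Rabs (f s))) a b
                   (-2 * Psi alpha (f b) - -2 * Psi alpha (f a))).
  { refine (is_RInt_ext _ _ _ _ _ _ Hftc). intros s Hs.
    assert (Hfs : 0 < f s) by (apply Hpos, Hab'; lra).
    cbv beta. unfold psi. rewrite Rabs_pos_eq by lra.
    destruct (Rlt_dec 0 (f s)); [apply eq_sym, Rmult_assoc | lra]. }
  assert (Heq := is_RInt_unique _ _ _ _ Hint). rewrite (is_RInt_unique _ _ _ _ Hext) in Heq.
  rewrite !energy_pos by (apply Hpos; lra). lra.
Qed.

Lemma is_derive_power_alpha_critical alpha (f df : R -> R) s :
  alpha <> 1 -> 0 < f s -> is_derive f s (df s) -> df s = -2 * Psi alpha (f s) ->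
  is_derive (fun t => Rpower (f t) alpha + 2 * alpha / (1 - alpha) * t) s 0.
Proof.
  intros Ha Hfs Hd Hslope.
  replace 0 with (df s * (alpha * Rpower (f s) (alpha - 1)) + 2 * alpha / (1 - alpha) * 1).
  - apply (is_derive_plus (fun t => Rpower (f t) alpha) (fun t => 2 * alpha / (1 - alpha) * t)).
    + apply (is_derive_comp (fun y => Rpower y alpha) f); [|exact Hd].
      apply is_derive_Reals, derivable_pt_lim_power, Hfs.
    + apply is_derive_scal, (is_derive_id (K := R_AbsRing)).
  - rewrite Hslope. unfold Psi.
    replace (-2 * (/ (1 - alpha) * Rpower (f s) (1 - alpha)) *
               (alpha * Rpower (f s) (alpha - 1)) + 2 * alpha / (1 - alpha) * 1)
      with (2 * alpha / (1 - alpha) * (1 - Rpower (f s) (1 - alpha) * Rpower (f s) (alpha - 1)))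
      by (field; lra).
    rewrite <- Rpower_plus. replace (1 - alpha + (alpha - 1)) with 0 by ring.
    rewrite Rpower_O by exact Hfs. ring.
Qed.

Section Phase.

Variables (alpha : R) (f df : R -> R).
Hypothesis Halpha : alpha < 1.
Hypothesis Hderive : forall t, 0 < t -> is_derive f t (df t).
Hypothesis Hcont : forall t, 0 < t -> continuous df t.
Hypothesis Hequation : forall a b, 0 < a -> a <= b -> (forall s, a <= s <= b -> f s <> 0) ->
  is_RInt (fun s => -2 * df s * psi alpha (Rabs (f s))) a b (df b - df a).

Lemma energy_continuous t : 0 < t -> continuous (energy alpha f df) t.
Proof.
  intros Ht. apply filterlim_energy; [exact Halpha | | apply Hcont, Ht].
  apply (ex_derive_continuous (K := R_AbsRing) (V := R_NormedModule)).
  eexists; apply Hderive, Ht.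
Qed.

Lemma energy_const_on_positive_phase a b :
  0 <= a < b -> (forall s, a < s < b -> 0 < f s) ->
  filterlim (energy alpha f df) (at_right a) (locally (energy alpha f df a)) ->
  energy alpha f df b = energy alpha f df a.
Proof.
  intros Hab Hpos Hright.
  set (m := (a + b) / 2).
  assert (Hconserved : forall x y, a < x -> x <= y -> y < b ->
                         energy alpha f df y = energy alpha f df x).
  { intros x y Hx Hxy Hy.
    apply energy_conserved; [lra | exact Hxy | | | |].
    - intros s Hs; apply Hderive; lra.
    - intros s Hs; apply Hcont; lra.
    - intros s Hs; apply Hpos; lra.
    - apply Hequation; [lra | exact Hxy |]. intros s Hs. specialize (Hpos s ltac:(lra)). lra. }
  assert (Hmid : forall t, a < t < b -> energy alpha f df t = energy alpha f df m).
  { intros t Ht. destruct (Rle_lt_dec t m).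
    - symmetry; apply Hconserved; unfold m in *; lra.
    - apply Hconserved; unfold m in *; lra. }
  rewrite (at_right_limit_of_const_on _ a b _ _ ltac:(lra) Hmid Hright).
  apply (at_left_limit_of_const_on _ a b _ _ ltac:(lra) Hmid).
  apply continuous_at_left, energy_continuous; lra.
Qed.

End Phase.

Section Solution.

Variables (alpha : R) (phi dphi : R -> R).
Hypothesis Halpha : 0 < alpha < 1.
Hypothesis Hsol : CS_solution alpha phi dphi.

Lemma solution_derive t : 0 < t -> is_derive phi t (dphi t).
Proof. apply Hsol. Qed.

Lemma solution_dphi_continuous t : 0 < t -> continuous dphi t.
Proof.
  intros Ht. apply (continuous_of_within _ (fun s => 0 <= s)).
  - exists (mkposreal t Ht); intros s Hs.
    change (Rabs (s - t) < t) in Hs. apply Rabs_def2 in Hs. lra.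
  - apply Hsol; lra.
Qed.

Lemma solution_phi_continuous t : 0 < t -> continuous phi t.
Proof.
  intros Ht. apply (ex_derive_continuous (K := R_AbsRing) (V := R_NormedModule)).
  eexists; apply solution_derive, Ht.
Qed.

Lemma solution_phi_right_continuous_0 : filterlim phi (at_right 0) (locally (phi 0)).
Proof.
  apply (right_continuous_of_right_derivative phi 0 (dphi 0)).
  eapply filterlim_ext; [|apply Hsol]. intros h; cbv beta. now rewrite Rminus_0_r.
Qed.

Lemma solution_dphi_right_continuous_0 : filterlim dphi (at_right 0) (locally (dphi 0)).
Proof.
  eapply filterlim_filter_le_1; [|apply Hsol; lra].
  intros P [d Hd]. exists d; intros y Hy Hy0. apply Hd; [exact Hy | lra].
Qed.

Lemma solution_equation a b : 0 < a -> a <= b -> (forall s, a <= s <= b -> phi s <> 0) ->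
  is_RInt (fun s => -2 * dphi s * psi alpha (Rabs (phi s))) a b (dphi b - dphi a).
Proof. intros Ha; apply Hsol; lra. Qed.

Lemma solution_equation_opp a b : 0 < a -> a <= b -> (forall s, a <= s <= b -> - phi s <> 0) ->
  is_RInt (fun s => -2 * - dphi s * psi alpha (Rabs (- phi s))) a b (- dphi b - - dphi a).
Proof.
  intros Ha Hab Hnz.
  assert (H := solution_equation a b Ha Hab ltac:(intros s Hs; specialize (Hnz s Hs); lra)).
  apply (is_RInt_opp (V := R_NormedModule)) in H.
  replace (- dphi b - - dphi a) with (opp (dphi b - dphi a)) by (unfold opp; simpl; ring).
  refine (is_RInt_ext _ _ _ _ _ _ H). intros s _.
  rewrite Rabs_Ropp. unfold opp; simpl. ring.
Qed.

Lemma energy_const_while_positive t :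
  0 < t -> (forall s, 0 <= s < t -> 0 < phi s) ->
  energy alpha phi dphi t = energy alpha phi dphi 0.
Proof.
  intros Ht Hpos.
  apply (energy_const_on_positive_phase alpha phi dphi); try lra.
  - exact solution_derive.
  - exact solution_dphi_continuous.
  - exact solution_equation.
  - intros s Hs; apply Hpos; lra.
  - apply filterlim_energy;
      [lra | exact solution_phi_right_continuous_0 | exact solution_dphi_right_continuous_0].
Qed.

Lemma dphi_at_first_zero t1 :
  0 < t1 -> phi t1 = 0 -> (forall s, 0 <= s < t1 -> 0 < phi s) ->
  dphi t1 = energy alpha phi dphi 0.
Proof.
  intros Ht1 Hz Hpos. rewrite <- (energy_zero alpha phi dphi t1 Hz).
  apply energy_const_while_positive; assumption.
Qed.

Lemma stuck_excludes_negative_slope_at_zero t1 t0 :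
  0 < t1 <= t0 -> phi t1 = 0 -> dphi t1 < 0 -> phi t0 = 0 -> dphi t0 = 0 -> False.
Proof.
  intros Ht01 Hz1 Hd1 Hz0 Hd0.
  assert (Ht10 : t1 < t0) by (destruct (Req_dec t1 t0) as [->|]; lra).
  destruct (neg_right_of_neg_derive phi t1 (dphi t1) (solution_derive t1 ltac:(lra)) Hz1 Hd1)
    as [d [Hd Hneg]].
  set (u := t1 + Rmin d (t0 - t1) / 2).
  assert (Hm := Rmin_pos d (t0 - t1) Hd ltac:(lra)).
  assert (Hmd := Rmin_l d (t0 - t1)). assert (Hmt := Rmin_r d (t0 - t1)).
  assert (Hu : t1 < u < t0) by (unfold u; lra).
  destruct (first_zero (fun s => - phi s) u t0) as [t2 [Ht2 [Hz2 Hpos2]]].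
  - lra.
  - specialize (Hneg u ltac:(unfold u; lra)). lra.
  - lra.
  - apply (continuous_at_right (fun s => - phi s)), (continuous_opp phi).
    apply solution_phi_continuous; lra.
  - intros t Ht. apply (continuous_opp phi), solution_phi_continuous. lra.
  - assert (Hpos : forall s, t1 < s < t2 -> 0 < - phi s).
    { intros s Hs. destruct (Rlt_le_dec s u) as [Hsu|Hus].
      - specialize (Hneg s ltac:(unfold u in *; lra)). lra.
      - apply Hpos2; lra. }
    assert (Hopp_derive : forall t, 0 < t -> is_derive (fun s => - phi s) t (- dphi t))
      by (intros t Ht; apply (is_derive_opp phi), solution_derive, Ht).
    assert (Hslope : - dphi t2 = - dphi t1).
    { rewrite <- (energy_zero alpha (fun s => - phi s) (fun s => - dphi s) t2 Hz2).
      rewrite <- (energy_zero alpha (fun s => - phi s) (fun s => - dphi s) t1 ltac:(lra)).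
      apply energy_const_on_positive_phase; [lra | exact Hopp_derive | | | lra | exact Hpos |].
      - intros t Ht. apply (continuous_opp dphi), solution_dphi_continuous, Ht.
      - exact solution_equation_opp.
      - apply continuous_at_right, energy_continuous; [lra | exact Hopp_derive | | lra].
        intros t Ht. apply (continuous_opp dphi), solution_dphi_continuous, Ht. }
    assert (Hle : - dphi t2 <= 0).
    { apply (derive_nonpos_of_pos_left (fun s => - phi s) t2 _ (t2 - t1)); [| exact Hz2 | lra |].
      - apply Hopp_derive; lra.
      - intros s Hs; apply Hpos; lra. }
    lra.
Qed.

Lemma power_alpha_linear_while_positive T :
  0 < T -> (forall s, 0 <= s <= T -> 0 < phi s) -> energy alpha phi dphi 0 = 0 ->
  Rpower (phi T) alpha = Rpower (phi 0) alpha - 2 * alpha / (1 - alpha) * T.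
Proof.
  intros HT Hpos Hcrit.
  set (k := 2 * alpha / (1 - alpha)).
  set (Q := fun s => Rpower (phi s) alpha + k * s).
  assert (Hslope : forall s, 0 < s <= T -> dphi s = -2 * Psi alpha (phi s)).
  { intros s Hs.
    assert (E := energy_const_while_positive s ltac:(lra) ltac:(intros r Hr; apply Hpos; lra)).
    rewrite energy_pos in E by (apply Hpos; lra). lra. }
  assert (HQ' : forall s, 0 < s <= T -> is_derive Q s 0).
  { intros s Hs. apply (is_derive_power_alpha_critical alpha phi dphi); [lra | apply Hpos; lra | |].
    - apply solution_derive; lra.
    - apply Hslope, Hs. }
  assert (HQ0 : filterlim Q (at_right 0) (locally (Q 0))).
  { apply (filterlim_comp_2 (fun s => Rpower (phi s) alpha) (fun s => k * s) Rplus
             (G := locally (Rpower (phi 0) alpha)) (H := locally (k * 0)));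
      [| | exact (filterlim_plus (Rpower (phi 0) alpha) (k * 0))].
    - apply (filterlim_comp _ _ _ phi (fun y => Rpower y alpha) _ (locally (phi 0)));
        [exact solution_phi_right_continuous_0 |].
      apply (ex_derive_continuous (K := R_AbsRing) (V := R_NormedModule) (fun y => Rpower y alpha)).
      eexists; apply is_derive_Reals, derivable_pt_lim_power, Hpos; lra.
    - apply (continuous_at_right (fun s => k * s) 0).
      apply (continuous_mult (fun _ => k) (fun s => s));
        [apply continuous_const | apply continuous_id]. }
  assert (HQT : Q 0 = Q T).
  { apply (at_right_limit_of_const_on Q 0 T); [exact HT | | exact HQ0].
    intros t Ht. apply (const_of_derive_zero Q 0 T HQ'); lra. }
  unfold Q in HQT. lra.
Qed.

Lemma stuck_implies_critical :
  0 < phi 0 -> (exists t0, 0 <= t0 /\ phi t0 = 0 /\ dphi t0 = 0) ->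
  energy alpha phi dphi 0 = 0.
Proof.
  intros H0 [t0 [Ht0 [Hz0 Hd0]]].
  assert (Ht0' : 0 < t0) by (destruct (Req_dec t0 0) as [->|]; lra).
  destruct (first_zero phi 0 t0 Ht0' H0 ltac:(lra) solution_phi_right_continuous_0)
    as [t1 [Ht1 [Hz1 Hpos]]].
  { intros t Ht; apply solution_phi_continuous; lra. }
  rewrite <- (dphi_at_first_zero t1) by (tauto || lra).
  apply Rle_antisym.
  - apply (derive_nonpos_of_pos_left phi t1 _ t1); [apply solution_derive | | |]; try lra.
    intros s Hs; apply Hpos; lra.
  - apply Rnot_lt_le; intros Hneg.
    exact (stuck_excludes_negative_slope_at_zero t1 t0 Ht1 Hz1 Hneg Hz0 Hd0).
Qed.

Lemma critical_implies_stuck :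
  0 < phi 0 -> energy alpha phi dphi 0 = 0 ->
  exists t0, 0 <= t0 /\ phi t0 = 0 /\ dphi t0 = 0.
Proof.
  intros H0 Hcrit.
  set (T := Rpower (phi 0) alpha / (2 * alpha / (1 - alpha))).
  assert (HT : 0 < T).
  { apply Rdiv_lt_0_compat; [apply exp_pos | apply Rdiv_lt_0_compat; lra]. }
  destruct (classic (exists s, 0 <= s <= T /\ phi s <= 0)) as [[s [Hs Hps]] | Hnone].
  - assert (Hs0 : 0 < s) by (destruct (Req_dec s 0) as [->|]; lra).
    destruct (first_zero phi 0 s Hs0 H0 Hps solution_phi_right_continuous_0)
      as [t1 [Ht1 [Hz1 Hpos]]].
    { intros t Ht; apply solution_phi_continuous; lra. }
    exists t1. split; [lra|]. split; [exact Hz1|].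
    rewrite dphi_at_first_zero by (tauto || lra). exact Hcrit.
  - exfalso.
    assert (Hpos : forall s, 0 <= s <= T -> 0 < phi s).
    { intros s Hs. apply Rnot_le_lt; intros Hps. apply Hnone; exists s; auto. }
    assert (HphiT := power_alpha_linear_while_positive T HT Hpos Hcrit).
    replace (2 * alpha / (1 - alpha) * T) with (Rpower (phi 0) alpha) in HphiT
      by (unfold T; field; lra).
    assert (Hgt := exp_pos (alpha * ln (phi T))). unfold Rpower in HphiT. lra.
Qed.

End Solution.

Theorem proposition3p1 (alpha : R) (phi dphi : R -> R) :
  0 < alpha < 1 ->
  CS_solution alpha phi dphi ->
  0 < phi 0 ->
  ((exists t0 : R, 0 <= t0 /\ phi t0 = 0 /\ dphi t0 = 0) <->
   dphi 0 = -2 * Psi alpha (phi 0)).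
Proof.
  intros Halpha Hsol H0.
  assert (Henergy := energy_pos alpha phi dphi 0 H0).
  split.
  - intros Hstuck. assert (H := stuck_implies_critical alpha phi dphi Halpha Hsol H0 Hstuck). lra.
  - intros Hslope. apply (critical_implies_stuck alpha); [exact Halpha | exact Hsol | exact H0 |].
    lra.
Qed.
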